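(* Let $A\in GL_2(\mathbb{R})$ and let $\mathcal{C}$ be a multicone such that $A\mathcal{C}\subset\mathcal{C}$. If $A$ is conformal, then $A\mathcal{C}=\mathcal{C}$.
   Context: $\mathbb{RP}^1$ is the real projective line, on which $GL_2(\mathbb{R})$ acts. A multicone is a proper subset of $\mathbb{RP}^1$ that is a finite union of closed projective intervals. A matrix is conformal if its two eigenvalues have the same absolute value (equivalently, $|\det A|^{-1/2}MAM^{-1}\in O(2)$ for some invertible $M$). *)

From mathcomp Require Import all_boot all_order all_algebra.
From mathcomp Require Import reals.
Set Implicit Arguments. Unset Strict Implicit. Unset Printing Implicit Defensive.
Import Order.TTheory GRing.Theory Num.Theory.
Local Open Scope ring_scope.

(* A subset of RP^1 is encoded as the (scaling-invariant) set of nonzero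
   column vectors of R^2 whose line belongs to it. *)

Definition proj_cone (R : realType) (u w : 'cV[R]_2) : 'cV[R]_2 -> Prop :=
  fun v => v != 0 /\
    exists c a b : R, 0 <= a /\ 0 <= b /\ v = c *: (a *: u + b *: w).

(* A closed projective interval (with nonempty interior, not all of RP^1):
   endpoints given by two linearly independent vectors. *)
Definition proj_interval (R : realType) (I : 'cV[R]_2 -> Prop) : Prop :=
  exists u w : 'cV[R]_2, \det (row_mx u w) != 0 /\
    (forall v, I v <-> proj_cone u w v).

Definition multicone (R : realType) (C : 'cV[R]_2 -> Prop) : Prop :=
  (exists (n : nat) (I : 'I_n -> ('cV[R]_2 -> Prop)),
      (forall i, proj_interval (I i)) /\
      (forall v, C v <-> exists i, I i v)) /\
  (exists v : 'cV[R]_2, v != 0 /\ ~ C v).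

Definition mx_image (R : realType) (A : 'M[R]_2) (C : 'cV[R]_2 -> Prop) :
  'cV[R]_2 -> Prop := fun v => exists2 x, C x & v = A *m x.

Definition orthogonal_mx (R : realType) (B : 'M[R]_2) : Prop :=
  B^T *m B = 1%:M.

Definition conformal (R : realType) (A : 'M[R]_2) : Prop :=
  exists M : 'M[R]_2, M \in unitmx /\
    orthogonal_mx ((Num.sqrt `|\det A|)^-1 *: (M *m A *m invmx M)).

From mathcomp Require Import all_boot all_order all_algebra.
From mathcomp Require Import reals ring lra.
Set Implicit Arguments. Unset Strict Implicit. Unset Printing Implicit Defensive.
Import Order.TTheory GRing.Theory Num.Theory.
Local Open Scope ring_scope.

(* Conjugating by some M, A = rho M^-1 O M with O orthogonal, so A^2 acts on
   RP^1 as the rotation O^2.  Sending a line outside C to infinity, C becomes a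
   finite union of pairwise disjoint compact segments of the affine chart.  The
   image under A^2 of a segment is a segment contained in C, hence in a single
   component, so A^2 induces a self-map of the finite set of components; a
   periodic point gives m > 0 and a segment [a, b] mapped into itself by
   A^(2m).  Then det(x, A^(2m) x) has weakly opposite signs at the endpoints a
   and b.  But for a multiple of a conjugated rotation det(x, A^(2m) x) is
   c |M x|^2 with a constant c, so c = 0 and A^(2m) is a nonzero scalar l.
   Hence every v in C is A (A^(2m-1) (l^-1 v)), which lies in A C. *)

Lemma finite_family_periodic (T : finType) (X : Type) (F : T -> X -> Prop)
    (f : X -> X) (i0 : T) :
  (forall i, exists j, forall x, F i x -> F j (f x)) ->
  exists i m, (0 < m)%N /\ forall x, F i x -> F i (iter m f x).
Proof.
move=> step; have [g gP] := fin_all_exists step.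
have iterP k i x : F i x -> F (iter k g i) (iter k f x).
  by elim: k => // k IH Fx; apply/gP/IH.
have /trajectP[k lt_k e] := looping_order g i0.
exists (iter k g i0), (order g i0 - k)%N; split; first by rewrite subn_gt0.
by move=> x /(iterP (order g i0 - k)%N); rewrite -iterD subnK ?(ltnW lt_k) -?e.
Qed.

Lemma iter_mulmx (R : pzRingType) n (P : 'M[R]_n.+1) (v : 'cV_n.+1) m :
  iter m (mulmx P) v = P ^+ m *m v.
Proof.
by elim: m => [|m IH]; rewrite ?expr0 ?mul1mx //= IH exprS -mulmxE mulmxA.
Qed.

Lemma conjmx_exp (R : comUnitRingType) n (B P : 'M[R]_n.+1) m : B \in unitmx ->
  (invmx B *m P *m B) ^+ m = invmx B *m P ^+ m *m B.
Proof.
move=> B_unit; elim: m => [|m IH]; first by rewrite !expr0 mulmx1 mulVmx.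
rewrite !exprS IH -!mulmxE !mulmxA.
by rewrite -[invmx B *m P *m B *m invmx B]mulmxA mulmxV // mulmx1.
Qed.

Lemma mulmx_unit_neq0 (R : comUnitRingType) n m (P : 'M[R]_n.+1) (v : 'M_(n.+1, m)) :
  P \in unitmx -> v != 0 -> P *m v != 0.
Proof.
by move=> P_unit; apply: contraNneq => Pv0; rewrite -(mulKmx P_unit v) Pv0 mulmx0.
Qed.

Lemma detX (R : comRingType) n (A : 'M[R]_n.+1) k : \det (A ^+ k) = \det A ^+ k.
Proof.
by elim: k => [|k IH]; rewrite ?expr0 ?det1 // !exprS -mulmxE det_mulmx IH.
Qed.

Lemma pairwise_sym (T : eqType) (r : rel T) (s : seq T) x y : symmetric r ->
  pairwise r s -> x \in s -> y \in s -> x != y -> r x y.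
Proof.
move=> r_sym; elim: s => // z s IH; rewrite pairwise_cons => /andP[/allP rz rs].
rewrite !inE => /predU1P[->|xs] /predU1P[->|ys] neq; rewrite ?eqxx // in neq.
- by apply: rz.
- by rewrite r_sym; apply: rz.
- exact: IH.
Qed.

Section Segments.
Variable R : realFieldType.
Implicit Types (J K : R * R) (s : seq (R * R)) (t : R).

Definition in_seg J t := J.1 <= t <= J.2.
Definition in_segs s t := has (in_seg^~ t) s.
Definition seg_proper J := J.1 < J.2.
Definition seg_apart J K := (J.2 < K.1) || (K.2 < J.1).
Definition seg_hull J K := (Num.min J.1 K.1, Num.max J.2 K.2).

Definition seg_span (a b : R) : R * R := (Num.min a b, Num.max a b).

Lemma in_seg_span a b t : in_seg (seg_span a b) t = (0 <= (a - t) * (t - b)).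
Proof.
rewrite /in_seg /seg_span /=.
by have [ab|ba] := lerP a b; apply/andP/idP => [[] *|?]; (nra || split; nra).
Qed.

Lemma affine_nonvanishing_sign p q a b : a <= b ->
  (forall t, a <= t <= b -> p * t + q != 0) -> 0 < (p * a + q) * (p * b + q).
Proof.
move=> ab nz; rewrite ltNge; apply/negP => le0.
have [p0|p_neq0] := eqVneq p 0.
  have /nz : a <= a <= b by rewrite lexx ab.
  rewrite p0 mul0r add0r; apply/negP; rewrite negbK -sqrf_eq0 eq_le sqr_ge0 andbT.
  by move: le0; rewrite p0 !mul0r !add0r expr2.
pose t := - q / p.
have pt : p * t + q = 0 by rewrite /t; field.
have : 0 <= (a - t) * (t - b).
  have e : (p * a + q) * (p * b + q) = - (p ^+ 2 * ((a - t) * (t - b))).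
    by rewrite /t; field.
  by move: le0; rewrite e oppr_le0 pmulr_rge0 // exprn_even_gt0.
by rewrite -in_seg_span /seg_span (min_idPl ab) (max_idPr ab) => /nz; rewrite pt eqxx.
Qed.

Lemma seg_apartC : symmetric seg_apart.
Proof. by move=> J K; rewrite /seg_apart orbC. Qed.

Lemma in_seg_hull J K t : ~~ seg_apart J K ->
  in_seg (seg_hull J K) t = in_seg J t || in_seg K t.
Proof.
rewrite /seg_apart /in_seg negb_or -!leNgt /= ge_min le_max => /andP[h1 h2].
apply/idP/orP => [/andP[/orP[] h3 /orP[] h4]|[]/andP[-> ->]]; rewrite ?orbT //.
- by left; rewrite h3 h4.
- by case: (lerP t J.2) => h5; [left; rewrite h3 | right; rewrite h4 andbT; lra].
- by case: (lerP J.1 t) => h5; [left; rewrite h4 | right; rewrite h3 /=; lra].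
- by right; rewrite h3 h4.
Qed.

Lemma seg_proper_hull J K : seg_proper J -> seg_proper (seg_hull J K).
Proof. by rewrite /seg_proper /= gt_min !lt_max => ->. Qed.

Lemma segs_insert s J : all seg_proper s -> pairwise seg_apart s ->
  seg_proper J -> exists s', [/\ all seg_proper s', pairwise seg_apart s' &
    forall t, in_segs s' t = in_seg J t || in_segs s t].
Proof.
move: {2}(size s) (leqnn (size s)) => n; elim: n s J => [|n IH] s J.
  rewrite leqn0 => /nilP -> _ _ J_pr; exists [:: J].
  by rewrite /= J_pr; split=> // t; rewrite orbF.
move=> s_size s_pr s_apart J_pr.
have [J_apart|/allPn[K Ks JK]] := boolP (all (seg_apart J) s).
  by exists (J :: s); rewrite /= J_pr s_pr J_apart s_apart.
have sub_rem : {subset rem K s <= s} by apply: mem_subseq; apply: rem_subseq.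
have rem_size : (size (rem K s) <= n)%N.
  by rewrite size_rem // -subn1 leq_subLR add1n.
have rem_pr : all seg_proper (rem K s).
  by apply/allP => L /sub_rem; apply: (allP s_pr).
have rem_apart : pairwise seg_apart (rem K s).
  by have [m _ ->] := subseqP (rem_subseq K s); apply: pairwise_mask.
have [s' [s'_pr s'_apart s'E]] :=
  IH _ _ rem_size rem_pr rem_apart (seg_proper_hull K J_pr).
exists s'; split => // t.
by rewrite s'E in_seg_hull // /in_segs (perm_has _ (perm_to_rem Ks)) /= orbA.
Qed.

Lemma segs_disjoint_cover s : all seg_proper s -> exists s',
  [/\ all seg_proper s', pairwise seg_apart s' & in_segs s' =1 in_segs s].
Proof.
elim: s => [_|J s IH /andP[J_pr /IH[s' [s'_pr s'_apart s'E]]]]; first by exists [::].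
have [s'' [s''_pr s''_apart s''E]] := segs_insert s'_pr s'_apart J_pr.
by exists s''; split => // t; rewrite s''E s'E.
Qed.

Lemma segs_connected s c d : all seg_proper s -> pairwise seg_apart s ->
  c <= d -> (forall t, c <= t <= d -> in_segs s t) ->
  exists2 J, J \in s & J.1 <= c /\ d <= J.2.
Proof.
move=> s_pr s_apart cd cover.
have /hasP[J Js /andP[Jc cJ]] : in_segs s c by rewrite cover // lexx cd.
have [dJ|Jd] := lerP d J.2; first by exists J.
(* The midpoint t of J.2 and the first left endpoint y beyond J.2 is covered by
   no segment: one starting beyond J.2 starts at y or later, any other overlaps J. *)
pose y := \big[Num.min/d]_(K <- s | J.2 < K.1) K.1.
have Jy : J.2 < y by apply: lt_bigmin.
have yd : y <= d by apply: bigmin_le_id.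
pose t := (J.2 + y) / 2.
have /hasP[K Ks /andP[Kt tK]] : in_segs s t.
  by rewrite cover // /t; apply/andP; split; lra.
exfalso; have [JK|KJ] := ltrP J.2 K.1.
  have : y <= K.1 by apply: bigmin_inf_seq Ks JK _.
  rewrite /t in Kt; lra.
have JneK : J != K by apply: contraTneq tK => <-; rewrite /t -ltNge; lra.
have := pairwise_sym seg_apartC s_apart Js Ks JneK.
have := allP s_pr J Js; rewrite /seg_apart /seg_proper /t in tK *.
by move=> J_pr /orP[]; lra.
Qed.
End Segments.

Arguments seg_proper {R}.
Arguments seg_apart {R}.

Section Mx2.
Variable R : comRingType.
Implicit Types (X Y : 'M[R]_2) (u v w : 'cV[R]_2).

Lemma ord2_cases (i : 'I_2) : i = 0 \/ i = 1.
Proof. by case: i => [[|[|//]]] Hi; [left|right]; apply/val_inj. Qed.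

Lemma eq_mx2 X Y :
  X 0 0 = Y 0 0 -> X 0 1 = Y 0 1 -> X 1 0 = Y 1 0 -> X 1 1 = Y 1 1 -> X = Y.
Proof.
move=> e00 e01 e10 e11; apply/matrixP => i j.
by case: (ord2_cases i) => ->; case: (ord2_cases j) => ->.
Qed.

Lemma eq_cV2 u v : u 0 0 = v 0 0 -> u 1 0 = v 1 0 -> u = v.
Proof.
by move=> e0 e1; apply/matrixP => i j; rewrite ord1; case: (ord2_cases i) => ->.
Qed.

Lemma mulmx2E (m : nat) X (Y : 'M[R]_(2, m)) i j :
  (X *m Y) i j = X i 0 * Y 0 j + X i 1 * Y 1 j.
Proof.
rewrite mxE !big_ord_recl big_ord0 addr0.
by have -> : lift ord0 ord0 = 1 :> 'I_2 by apply/val_inj.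
Qed.

Lemma det_mx2 X : \det X = X 0 0 * X 1 1 - X 0 1 * X 1 0.
Proof.
have l1 : lift ord0 ord0 = 1 :> 'I_2 by apply/val_inj.
have l0 : lift 1 (0 : 'I_1) = 0 :> 'I_2 by apply/val_inj.
rewrite (expand_det_col _ 0) !big_ord_recl big_ord0 /cofactor !det_mx11 !mxE /=.
rewrite !l1 l0 /bump /= expr0 expr1 -[ord0]/(0 : 'I_2); ring.
Qed.

Definition det2 u w : R := u 0 0 * w 1 0 - u 1 0 * w 0 0.

Lemma row_mx2E u w i : (row_mx u w i 0 = u i 0) * (row_mx u w i 1 = w i 0).
Proof.
split; first by rewrite -(row_mxEl u w i 0); congr (row_mx u w i _); apply/val_inj.
by rewrite -(row_mxEr u w i 0); congr (row_mx u w i _); apply/val_inj.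
Qed.

Lemma det_row_mx2 u w : \det (row_mx u w) = det2 u w.
Proof. by rewrite det_mx2 /det2 !row_mx2E [w 0 0 * _]mulrC. Qed.

Lemma det2_mulmx X u w : det2 (X *m u) (X *m w) = \det X * det2 u w.
Proof. by rewrite /det2 !mulmx2E det_mx2; ring. Qed.

Definition vec2 (a b : R) : 'cV[R]_2 := \col_i (if i == 0 then a else b).

Lemma vec2E a b : (vec2 a b 0 0 = a) * (vec2 a b 1 0 = b).
Proof. by rewrite !mxE. Qed.

Lemma vec2_eq0 a b : (vec2 a b == 0) = (a == 0) && (b == 0).
Proof.
apply/eqP/andP => [v0|[/eqP a0 /eqP b0]]; last by apply: eq_cV2; rewrite vec2E mxE.
by split; apply/eqP; [rewrite -(vec2E a b).1 | rewrite -(vec2E a b).2]; rewrite v0 mxE.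
Qed.

Definition orient X u : R := det2 u (X *m u).

Lemma orientZ c X u : orient (c *: X) u = c * orient X u.
Proof. by rewrite /orient -scalemxAl /det2 !mxE; ring. Qed.

End Mx2.

Lemma orient_conjmx (R : comUnitRingType) (M X : 'M[R]_2) u : M \in unitmx ->
  orient (invmx M *m X *m M) u = (\det M)^-1 * orient X (M *m u).
Proof.
move=> M_unit; rewrite /orient.
have -> : invmx M *m X *m M *m u = invmx M *m (X *m (M *m u)) by rewrite !mulmxA.
by rewrite -{1}(mulKmx M_unit u) det2_mulmx det_inv.
Qed.

Section Real2.
Variable R : realFieldType.
Implicit Types (u v w : 'cV[R]_2).

Lemma cV2_sqr_gt0 v : v != 0 -> 0 < v 0 0 ^+ 2 + v 1 0 ^+ 2.
Proof.
move=> v_neq0; rewrite lt_neqAle addr_ge0 ?sqr_ge0 // andbT eq_sym.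
rewrite paddr_eq0 ?sqr_ge0 // !sqrf_eq0; apply: contra v_neq0 => /andP[/eqP v0 /eqP v1].
by apply/eqP/eq_cV2; rewrite mxE.
Qed.

Definition slope v : R := v 0 0 / v 1 0.

Lemma slope_vec2 t : slope (vec2 t 1) = t.
Proof. by rewrite /slope !vec2E divr1. Qed.

Lemma det2_slope u v : u 1 0 != 0 -> v 1 0 != 0 ->
  det2 u v = u 1 0 * v 1 0 * (slope u - slope v).
Proof. by move=> u1 v1; rewrite /det2 /slope; field; apply/andP. Qed.

Lemma unitmx_e1 p : p != 0 -> exists2 B : 'M[R]_2, B \in unitmx & B *m vec2 1 0 = p.
Proof.
move=> p0; exists (row_mx p (vec2 (- p 1 0) (p 0 0))).
  rewrite unitmxE unitfE det_row_mx2 /det2 !vec2E; apply: lt0r_neq0.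
  by rewrite (_ : _ - _ = p 0 0 ^+ 2 + p 1 0 ^+ 2) ?cV2_sqr_gt0 //; ring.
by apply: eq_cV2; rewrite !mulmx2E !vec2E !row_mx2E mulr1 mulr0 addr0.
Qed.

End Real2.

Section Cones.
Variable R : realType.
Implicit Types (P Q : 'M[R]_2) (u v w : 'cV[R]_2) (J : R * R) (s : seq (R * R)).

Lemma proj_coneE u w v : det2 u w != 0 ->
  proj_cone u w v <-> v != 0 /\ 0 <= det2 u v * det2 v w.
Proof.
move=> uw; split => [[v0 [c [a [b [a0 [b0 vE]]]]]]|[v0 uvw]].
  split=> //; rewrite vE (_ : _ * _ = (c * det2 u w) ^+ 2 * (a * b)).
    by rewrite mulr_ge0 ?sqr_ge0 ?mulr_ge0.
  by rewrite /det2 !mxE; ring.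
split=> //; pose a := det2 v w / det2 u w; pose b := det2 u v / det2 u w.
have vE : v = a *: u + b *: w by apply: eq_cV2; rewrite !mxE /a /b /det2; field.
have ab : 0 <= a * b.
  have -> : a * b = det2 u v * det2 v w / det2 u w ^+ 2 by rewrite /a /b; field.
  by rewrite divr_ge0 ?sqr_ge0.
have [[a0 b0]|[a0 b0]] : (0 <= a /\ 0 <= b) \/ (a <= 0 /\ b <= 0).
  by case: (lerP 0 a) (lerP 0 b) => a0 [] b0; [left|right; split; nra..].
  by exists 1, a, b; rewrite scale1r.
by exists (-1), (- a), (- b); rewrite !oppr_ge0 scaleN1r !scaleNr -opprD opprK.
Qed.

Lemma proj_coneZ u w v c : c != 0 -> proj_cone u w v -> proj_cone u w (c *: v).
Proof.
move=> c0 [v0 [d [a [b [a0 [b0 vE]]]]]]; split; first by rewrite scaler_eq0 negb_or c0.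
by exists (c * d), a, b; rewrite vE scalerA.
Qed.

Lemma proj_cone_mulmx P u w v : P \in unitmx ->
  proj_cone (P *m u) (P *m w) (P *m v) <-> proj_cone u w v.
Proof.
have img X u' w' x : X \in unitmx ->
    proj_cone u' w' x -> proj_cone (X *m u') (X *m w') (X *m x).
  move=> X_unit [x0 [c [a [b [a0 [b0 xE]]]]]]; split; first exact: mulmx_unit_neq0.
  by exists c, a, b; rewrite xE -scalemxAr mulmxDr -!scalemxAr.
move=> P_unit; split; last exact: img.
have P'_unit : invmx P \in unitmx by rewrite unitmx_inv.
by move/(img _ _ _ _ P'_unit); rewrite !mulKmx.
Qed.

(* Affine chart of RP^1: the line of v with v 1 0 != 0 has coordinate slope v,
   and the line of vec2 1 0 is the point at infinity. *)
Definition chart_seg J v := v 1 0 != 0 /\ in_seg J (slope v).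
Definition chart_segs s v := v 1 0 != 0 /\ in_segs s (slope v).

Lemma proj_cone_chart u w : det2 u w != 0 -> ~ proj_cone u w (vec2 1 0) ->
  seg_proper (seg_span (slope u) (slope w)) /\
  forall v, proj_cone u w v <-> chart_seg (seg_span (slope u) (slope w)) v.
Proof.
move=> uw e1_out.
have uw1 : 0 < u 1 0 * w 1 0.
  rewrite ltNge; apply/negP => le0; apply: e1_out; apply/proj_coneE => //.
  by rewrite vec2_eq0 oner_eq0 /det2 !vec2E; split => //; nra.
have u1 : u 1 0 != 0 by apply: contraTneq uw1 => ->; rewrite mul0r ltxx.
have w1 : w 1 0 != 0 by apply: contraTneq uw1 => ->; rewrite mulr0 ltxx.
split.
  have : slope u != slope w.
    by apply: contraNneq uw => e; rewrite det2_slope // e subrr mulr0.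
  rewrite /seg_span /seg_proper /=.
  by case: (ltgtP (slope u) (slope w)) => // ->; rewrite eqxx.
move=> v; rewrite proj_coneE //.
have [v1|v1] := eqVneq (v 1 0) 0.
  split=> [[v0 le0]|[]]; last by rewrite v1 eqxx.
  have v00 : v 0 0 = 0.
    apply/eqP; rewrite -sqrf_eq0 eq_le sqr_ge0 andbT.
    by move: le0; rewrite /det2 v1; nra.
  by exfalso; move/eqP: v0; apply; apply: eq_cV2; rewrite mxE.
rewrite /chart_seg in_seg_span.
have -> : det2 u v * det2 v w =
    u 1 0 * w 1 0 * v 1 0 ^+ 2 * ((slope u - slope v) * (slope v - slope w)).
  by rewrite !det2_slope //; ring.
rewrite pmulr_rge0; last by rewrite mulr_gt0 // exprn_even_gt0.
by split=> [[]|[]]; split=> //; apply: contraNneq v1 => ->; rewrite mxE.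
Qed.

Lemma proj_cone_vec2 J v : seg_proper J ->
  proj_cone (vec2 J.1 1) (vec2 J.2 1) v <-> chart_seg J v.
Proof.
case: J => a b; rewrite /seg_proper /= => ab.
have D : det2 (vec2 a 1) (vec2 b 1) != 0.
  by rewrite /det2 !vec2E mulr1 mul1r subr_eq0 lt_eqF.
have e1_out : ~ proj_cone (vec2 a 1) (vec2 b 1) (vec2 1 0).
  by move/(proj_coneE _ D) => [_]; rewrite /det2 !vec2E; nra.
have [_ ->] := proj_cone_chart D e1_out.
by rewrite !slope_vec2 /seg_span (min_idPl (ltW ab)) (max_idPr (ltW ab)).
Qed.

Lemma chart_seg_vec2 J t : in_seg J t -> chart_seg J (vec2 t 1).
Proof. by split; rewrite ?slope_vec2 // vec2E oner_neq0. Qed.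

Lemma chart_seg_stable_orient J Q : seg_proper J ->
  (forall v, chart_seg J v -> chart_seg J (Q *m v)) ->
  orient Q (vec2 J.1 1) * orient Q (vec2 J.2 1) <= 0.
Proof.
case: J => a b; rewrite /seg_proper /= => ab QJ.
have Q1 t : (Q *m vec2 t 1) 1 0 = Q 1 0 * t + Q 1 1 by rewrite mulmx2E !vec2E mulr1.
have pos : 0 < (Q *m vec2 a 1) 1 0 * (Q *m vec2 b 1) 1 0.
  rewrite !Q1; apply: affine_nonvanishing_sign (ltW ab) _ => t abt.
  by have [] := QJ _ (chart_seg_vec2 (J := (a, b)) abt); rewrite Q1.
have [xa1 /andP[ax _]] : chart_seg (a, b) (Q *m vec2 a 1).
  by apply/QJ/chart_seg_vec2; rewrite /in_seg lexx ltW.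
have [yb1 /andP[_ yb]] : chart_seg (a, b) (Q *m vec2 b 1).
  by apply/QJ/chart_seg_vec2; rewrite /in_seg lexx ltW.
rewrite /orient !det2_slope ?vec2E ?oner_neq0 // !slope_vec2 !mul1r mulrACA.
by rewrite pmulr_rle0 //; apply: mulr_le0_ge0; rewrite ?subr_le0 ?subr_ge0.
Qed.

Lemma chart_segs_step s Q J : Q \in unitmx ->
  all seg_proper s -> pairwise seg_apart s ->
  (forall v, chart_segs s v -> chart_segs s (Q *m v)) -> J \in s ->
  exists2 K, K \in s & forall v, chart_seg J v -> chart_seg K (Q *m v).
Proof.
move=> Q_unit s_pr s_apart Qs Js; have J_pr := allP s_pr J Js.
pose u := vec2 J.1 1; pose w := vec2 J.2 1.
have image y : proj_cone (Q *m u) (Q *m w) y -> chart_segs s y.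
  rewrite -(mulKVmx Q_unit y) proj_cone_mulmx // proj_cone_vec2 // => -[y1 Jy].
  by apply: Qs; split=> //; apply/hasP; exists J.
have D : det2 (Q *m u) (Q *m w) != 0.
  rewrite det2_mulmx mulf_neq0 //; first by rewrite -unitfE -unitmxE.
  by rewrite /det2 !vec2E mulr1 mul1r subr_eq0 lt_eqF.
have e1_out : ~ proj_cone (Q *m u) (Q *m w) (vec2 1 0).
  by move/image => []; rewrite vec2E eqxx.
(* The image of J is a projective interval inside the union of s, hence a
   segment K, which lies in one component J' since it is connected. *)
have [K_pr imageE] := proj_cone_chart D e1_out.
set K := seg_span _ _ in K_pr imageE.
have [J' J's [J'K KJ']] : exists2 J', J' \in s & J'.1 <= K.1 /\ K.2 <= J'.2.
  apply: segs_connected => // [|t Kt]; first exact: ltW.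
  by have /imageE/image[_] := chart_seg_vec2 Kt; rewrite slope_vec2.
exists J' => // v; rewrite -proj_cone_vec2 // -(proj_cone_mulmx _ _ _ Q_unit) imageE.
case=> v1 /andP[Kv vK]; split=> //; apply/andP; split.
  exact: le_trans Kv.
exact: le_trans KJ'.
Qed.

Lemma chart_segs_cycle s Q J0 : Q \in unitmx ->
  all seg_proper s -> pairwise seg_apart s -> J0 \in s ->
  (forall v, chart_segs s v -> chart_segs s (Q *m v)) ->
  exists m, (0 < m)%N /\
    exists2 J, seg_proper J & forall v, chart_seg J v -> chart_seg J (Q ^+ m *m v).
Proof.
move=> Q_unit s_pr s_apart J0s Qs.
have step (i : seq_sub s) :
    exists j : seq_sub s, forall v, chart_seg (val i) v -> chart_seg (val j) (Q *m v).
  have [K Ks QK] := chart_segs_step Q_unit s_pr s_apart Qs (valP i).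
  by exists (SeqSub Ks).
have [i [m [m_gt0 cyc]]] :=
  @finite_family_periodic _ _ (fun i v => chart_seg (val i) v) (mulmx Q)
    (SeqSub J0s) step.
exists m; split=> //; exists (val i); first exact: (allP s_pr _ (valP i)).
by move=> v /cyc; rewrite iter_mulmx.
Qed.

Lemma proj_interval_chart (I : 'cV[R]_2 -> Prop) B :
  proj_interval I -> B \in unitmx -> ~ I (B *m vec2 1 0) ->
  exists2 J, seg_proper J & forall v, I (B *m v) <-> chart_seg J v.
Proof.
move=> [u [w [D IE]]] B_unit e1_out.
pose u' := invmx B *m u; pose w' := invmx B *m w.
have IB v : I (B *m v) <-> proj_cone u' w' v.
  by rewrite IE -(proj_cone_mulmx u' w' v B_unit) /u' /w' !mulKVmx.
have D' : det2 u' w' != 0.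
  by rewrite det2_mulmx -det_row_mx2 mulf_neq0 // det_inv invr_eq0 -unitfE -unitmxE.
have [|J_pr JE] := proj_cone_chart D'; first by rewrite -IB.
by exists (seg_span (slope u') (slope w')) => // v; rewrite IB JE.
Qed.

Lemma multicone_chart C : multicone C ->
  exists2 B, B \in unitmx & exists s, [/\ all seg_proper s, pairwise seg_apart s &
    forall v, C (B *m v) <-> chart_segs s v].
Proof.
move=> [[n [I [I_itv CE]]] [p [p0 Cp]]].
have [B B_unit Be1] := unitmx_e1 p0.
have Jex i : exists J, seg_proper J /\ forall v, I i (B *m v) <-> chart_seg J v.
  have [|J J_pr JE] := proj_interval_chart (I_itv i) B_unit; last by exists J.
  by rewrite Be1 => Ip; apply: Cp; apply/CE; exists i.
have [J JP] := fin_all_exists Jex.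
have [|s [s_pr s_apart sE]] := @segs_disjoint_cover _ [seq J i | i <- enum 'I_n].
  by apply/allP => _ /mapP[i _ ->]; apply: (JP i).1.
exists B => //; exists s; split=> // v; rewrite CE /chart_segs sE; split.
  move=> [i /(JP i).2[v1 Jv]]; split=> //; apply/hasP; exists (J i) => //.
  by apply/mapP; exists i; rewrite ?mem_enum.
by move=> [v1 /hasP[_ /mapP[i _ ->] Jv]]; exists i; apply/(JP i).2.
Qed.

Lemma multicone_stable_orient C P x : multicone C -> C x -> P \in unitmx ->
  (forall v, C v -> C (P *m v)) ->
  exists m, (0 < m)%N /\ exists u w,
    [/\ u != 0, w != 0 & orient (P ^+ m) u * orient (P ^+ m) w <= 0].
Proof.
move=> C_mc Cx P_unit PC.
have [B B_unit [s [s_pr s_apart CE]]] := multicone_chart C_mc.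
pose Q := invmx B *m P *m B.
have Q_unit : Q \in unitmx by rewrite !unitmx_mul unitmx_inv B_unit P_unit.
have Qs v : chart_segs s v -> chart_segs s (Q *m v).
  by rewrite -!CE /Q !mulmxA mulmxV // mul1mx -mulmxA; apply: PC.
have : C (B *m (invmx B *m x)) by rewrite mulKVmx.
case/CE => _ /hasP[J0 J0s _].
have [m [m_gt0 [J J_pr QJ]]] := chart_segs_cycle Q_unit s_pr s_apart J0s Qs.
have vec2_neq0 t : B *m vec2 t 1 != 0.
  by rewrite mulmx_unit_neq0 // vec2_eq0 oner_eq0 andbF.
exists m; split=> //; exists (B *m vec2 J.1 1), (B *m vec2 J.2 1); split=> //.
have := chart_seg_stable_orient J_pr QJ; rewrite /Q conjmx_exp // !orient_conjmx //.
by rewrite mulrACA -expr2 pmulr_rle0 // exprn_even_gt0 // invr_eq0 -unitfE -unitmxE.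
Qed.

Lemma multiconeZ C v c : multicone C -> c != 0 -> C v -> C (c *: v).
Proof.
move=> [[n [I [I_itv CE]]] _] c0 /CE[i Iv]; apply/CE; exists i.
by have [u [w [_ IE]]] := I_itv i; apply/IE/proj_coneZ/IE.
Qed.

End Cones.

Section Conformal.
Variable R : realType.
Implicit Types (A M N O : 'M[R]_2) (u w : 'cV[R]_2).

Definition rotation_mx N := orthogonal_mx N /\ \det N = 1.

Lemma orthogonal_mx_exp O k : orthogonal_mx O -> orthogonal_mx (O ^+ k).
Proof.
move=> O_orth; elim: k => [|k IH]; first by rewrite /orthogonal_mx expr0 trmx1 mulmx1.
rewrite /orthogonal_mx exprS -mulmxE trmx_mul mulmxA.
by rewrite -[(O ^+ k)^T *m O^T *m O]mulmxA O_orth mulmx1.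
Qed.

Lemma det_orthogonal_mx_sqr O : orthogonal_mx O -> \det O ^+ 2 = 1.
Proof. by move/(congr1 determinant); rewrite det_mulmx det_tr det1 expr2. Qed.

Lemma conformal_sqr_exp A m : A \in unitmx -> conformal A ->
  exists M (r : R) N, [/\ M \in unitmx, r != 0, rotation_mx N &
                    (A ^+ 2) ^+ m = r *: (invmx M *m N *m M)].
Proof.
move=> A_unit [M [M_unit O_orth]].
set rho := Num.sqrt _ in O_orth; set O := _ *: _ in O_orth.
have rho_gt0 : 0 < rho by rewrite sqrtr_gt0 normr_gt0 -unitfE -unitmxE.
have AE : A = rho *: (invmx M *m O *m M).
  rewrite /O -scalemxAr -scalemxAl scalerA mulfV ?gt_eqF // scale1r.
  by rewrite !mulmxA mulVmx // mul1mx mulmxKV.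
exists M, (rho ^+ (2 * m)), (O ^+ (2 * m)); split=> //.
- by rewrite expf_neq0 ?gt_eqF.
- split; first exact: orthogonal_mx_exp.
  by rewrite detX exprM det_orthogonal_mx_sqr // expr1n.
- by rewrite -exprM AE exprZn conjmx_exp.
Qed.

Lemma rotation_mx2E N : rotation_mx N -> N 0 1 = - N 1 0 /\ N 1 1 = N 0 0.
Proof.
move=> [N_orth]; rewrite det_mx2 => N_det.
have e i j := congr1 (fun X : 'M[R]_2 => X i j) N_orth.
move: (e 0 0) (e 0 1) (e 1 1); rewrite !mulmx2E !mxE /= => e00 e01 e11.
have : (N 0 1 + N 1 0) ^+ 2 + (N 1 1 - N 0 0) ^+ 2 = 0 by rewrite !expr2; nra.
move/eqP; rewrite paddr_eq0 ?sqr_ge0 // !sqrf_eq0 => /andP[/eqP s0 /eqP c0].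
by split; lra.
Qed.

Lemma orient_rotation N u : rotation_mx N ->
  orient N u = N 1 0 * (u 0 0 ^+ 2 + u 1 0 ^+ 2).
Proof.
by move=> /rotation_mx2E[N01 N11]; rewrite /orient /det2 !mulmx2E N01 N11; ring.
Qed.

Lemma rotation_mx_scalar N : rotation_mx N -> N 1 0 = 0 -> exists2 l, l != 0 & N = l%:M.
Proof.
move=> N_rot N10; have [N01 N11] := rotation_mx2E N_rot.
have N00 : N 0 0 ^+ 2 = 1 by case: N_rot => _; rewrite det_mx2 N01 N11 N10 expr2; lra.
exists (N 0 0).
  by apply: contra_eqN N00 => /eqP->; rewrite expr2 mul0r eq_sym oner_eq0.
by apply: eq_mx2; rewrite !mxE /= ?N01 ?N11 ?N10 ?oppr0.
Qed.

Lemma conformal_orient_scalar A m u w : A \in unitmx -> conformal A ->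
  u != 0 -> w != 0 ->
  orient ((A ^+ 2) ^+ m) u * orient ((A ^+ 2) ^+ m) w <= 0 ->
  exists2 l, l != 0 & (A ^+ 2) ^+ m = l%:M.
Proof.
move=> A_unit A_conf u0 w0.
have [M [r [N [M_unit r0 N_rot ->]]]] := conformal_sqr_exp m A_unit A_conf.
rewrite !orientZ !orient_conjmx // !orient_rotation // => le0.
have Su := cV2_sqr_gt0 (mulmx_unit_neq0 M_unit u0).
have Sw := cV2_sqr_gt0 (mulmx_unit_neq0 M_unit w0).
set su := _ + _ in Su; set sw := _ + _ in Sw.
have c0 : r / \det M != 0 by rewrite mulf_neq0 // invr_eq0 -unitfE -unitmxE.
have N10 : N 1 0 = 0.
  move: le0; set lhs := (X in X <= 0).
  have -> : lhs = (r / \det M * N 1 0) ^+ 2 * (su * sw) by rewrite /lhs /su /sw; ring.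
  rewrite pmulr_lle0 ?mulr_gt0 // => sq_le0.
  have : (r / \det M * N 1 0) ^+ 2 == 0 by rewrite eq_le sq_le0 sqr_ge0.
  by rewrite sqrf_eq0 mulf_eq0 (negbTE c0) => /eqP.
have [l l0 ->] := rotation_mx_scalar N_rot N10.
exists (r * l); first by rewrite mulf_neq0.
by rewrite mul_mx_scalar -scalemxAl mulVmx // scalemx1 scale_scalar_mx.
Qed.

End Conformal.

Theorem lemma3p6 (R : realType) (A : 'M[R]_2) (C : 'cV[R]_2 -> Prop) :
  A \in unitmx -> multicone C ->
  (forall v, mx_image A C v -> C v) ->
  conformal A ->
  forall v, mx_image A C v <-> C v.
Proof.
move=> A_unit C_mc AC_C A_conf v; split; first exact: AC_C.
have CA k x : C x -> C (A ^+ k *m x).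
  elim: k x => [|k IH] x Cx; first by rewrite expr0 mul1mx.
  rewrite exprS -mulmxE -mulmxA; apply: AC_C.
  by exists (A ^+ k *m x); first exact: IH.
move=> Cv; have A2_unit : A ^+ 2 \in unitmx by rewrite unitrX.
have [m [m_gt0 [u [w [u0 w0 uw]]]]] := multicone_stable_orient C_mc Cv A2_unit (CA 2%N).
have [l l0 Al] := conformal_orient_scalar A_unit A_conf u0 w0 uw.
exists (A ^+ (2 * m).-1 *m (l^-1 *: v)).
  by apply: CA; apply: multiconeZ; rewrite ?invr_eq0.
rewrite mulmxA mulmxE -exprS prednK ?muln_gt0 // exprM Al.
by rewrite mul_scalar_mx scalerA mulfV // scale1r.
Qed.
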